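(* Let $R$ be an abelian ring and $\alpha$ a ring endomorphism of $R$. The following are equivalent: (1) $R$ is weakly $r$-clean; (2) the formal power series ring $R[[x]]$ is weakly $r$-clean; (3) the skew formal power series ring $R[[x;\alpha]]$ is weakly $r$-clean.
   Context: Rings are associative with identity; $R$ is abelian if all idempotents are central. $Idem(R)$ denotes idempotents and $Reg(R)=\{r: r=ryr \text{ for some } y\in R\}$ regular elements. An element is weakly $r$-clean if it equals $r+e$ or $r-e$ with $r\in Reg(R)$, $e\in Idem(R)$; a ring is weakly $r$-clean if all elements are. $R[[x;\alpha]]$ is the ring of formal power series $\sum_{i\ge0}a_ix^i$ with $a_i\in R$, with multiplication determined by $xr=\alpha(r)x$ for $r\in R$; $R[[x]]=R[[x;\mathrm{id}_R]]$. *)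

From HB Require Import structures.
From mathcomp Require Import all_boot all_order all_algebra.
Set Implicit Arguments. Unset Strict Implicit. Unset Printing Implicit Defensive.
Import GRing.Theory.
Local Open Scope ring_scope.

(** Weak r-cleanness, stated for a (carrier with) ring operations
    add / opp / mul, so that it applies uniformly to R and to the
    (skew) formal power series rings built below. *)
Section WeaklyRClean.
Variables (T : Type) (add : T -> T -> T) (opp : T -> T) (mul : T -> T -> T).

Definition is_idem (e : T) : Prop := mul e e = e.
Definition is_reg (r : T) : Prop := exists y, r = mul (mul r y) r.
Definition weakly_r_clean_elem (a : T) : Prop :=
  exists r e, is_reg r /\ is_idem e /\ (a = add r e \/ a = add r (opp e)).
Definition weakly_r_clean_ops : Prop := forall a : T, weakly_r_clean_elem a.
End WeaklyRClean.

Definition weakly_r_clean (R : nzRingType) : Prop :=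
  weakly_r_clean_ops (@GRing.add R) (@GRing.opp R) (@GRing.mul R).

Definition abelian_ring (R : nzRingType) : Prop :=
  forall e : R, e * e = e -> forall r : R, e * r = r * e.

(** Skew formal power series R[[x; alpha]]: a series sum_i a_i x^i is
    represented by its coefficient function nat -> R.  Multiplication is
    determined by x r = alpha(r) x, i.e.
    (a_i x^i)(b_j x^j) = a_i alpha^i(b_j) x^(i+j). *)
Definition pseries (R : nzRingType) := nat -> R.

Definition ps_add (R : nzRingType) (f g : pseries R) : pseries R :=
  fun n => f n + g n.
Definition ps_opp (R : nzRingType) (f : pseries R) : pseries R :=
  fun n => - f n.
Definition ps_mul (R : nzRingType) (alpha : R -> R) (f g : pseries R)
  : pseries R :=
  fun n => \sum_(i < n.+1) f i * iter i alpha (g (n - i)%N).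

Definition skew_ps_weakly_r_clean (R : nzRingType) (alpha : R -> R) : Prop :=
  weakly_r_clean_ops (@ps_add R) (@ps_opp R) (ps_mul alpha).

Definition ps_weakly_r_clean (R : nzRingType) : Prop :=
  skew_ps_weakly_r_clean (@id R).

From mathcomp Require Import all_boot all_order all_algebra.
From Stdlib Require Import FunctionalExtensionality.
Set Implicit Arguments. Unset Strict Implicit. Unset Printing Implicit Defensive.
Import GRing.Theory.
Local Open Scope ring_scope.

(* A regular element r has a reflexive inverse z (r z r = r, z r z = z).
   In an abelian ring g := r z is a central idempotent, and for every central
   t with t^2 = 1 the element r + (1 - g) t is right invertible.  With
   t := +-(2e - 1) this rewrites r +- e as c +- E, where c is right invertible
   and E := g e + (1 - g)(1 - e) is idempotent.  A power series whose
   constant term is right invertible is right invertible (solve for the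
   coefficients one at a time), hence regular, so f = (f -+ E) +- E shows
   that R[[x; alpha]] is weakly r-clean.  Conversely, taking constant terms
   respects +, - and the product, so it maps decompositions in R[[x; alpha]]
   to decompositions in R.  Neither direction uses that alpha is a ring
   endomorphism. *)

Lemma reflexive_inverse (R : pzRingType) (r y : R) :
  r = r * y * r -> exists z, r * z * r = r /\ z * r * z = z.
Proof.
move=> ryr; exists (y * r * y); split; first by rewrite !mulrA -!ryr.
have ryry : r * (y * (r * y)) = r * y by rewrite !mulrA -ryr.
by rewrite -!mulrA !ryry.
Qed.

Lemma idemC (R : pzRingType) (e : R) : e * e = e -> (1 - e) * (1 - e) = 1 - e.
Proof. by move=> ee; rewrite mulrBl mul1r mulrBr mulr1 ee subrr subr0. Qed.

Lemma idem_mulC (R : pzRingType) (e : R) : e * e = e -> e * (1 - e) = 0.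
Proof. by move=> ee; rewrite mulrBr mulr1 ee subrr. Qed.

Lemma idemC_mul (R : pzRingType) (e : R) : e * e = e -> (1 - e) * e = 0.
Proof. by move=> ee; rewrite mulrBl mul1r ee subrr. Qed.

Lemma sqr_idem_reflection (R : pzRingType) (e : R) :
  e * e = e -> (e *+ 2 - 1) * (e *+ 2 - 1) = 1.
Proof.
move=> ee; rewrite mulrBl !mulrBr !mulr1 mul1r mulrnAl mulrnAr ee -mulrnA.
by rewrite -mulrnBr // opprB addrC subrK.
Qed.

Section AbelianRing.
Variable R : nzRingType.
Hypothesis abR : abelian_ring R.

Lemma reflexive_inverse_rinv (r z t : R) :
  r * z * r = r -> z * r * z = z ->
  t * t = 1 -> (forall u, t * u = u * t) ->
  (r + (1 - r * z) * t) * (z + (1 - r * z) * t) = 1.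
Proof.
move=> rzr zrz tt tC; set f := 1 - r * z.
have gg : (r * z) * (r * z) = r * z by rewrite mulrA rzr.
have ff : f * f = f by exact: idemC.
have fC := abR ff.
have rf : r * f = 0 by rewrite mulrBr mulr1 -(abR gg) rzr subrr.
have zf : z * f = 0 by rewrite mulrBr mulr1 mulrA zrz subrr.
rewrite mulrDl !mulrDr mulrA rf mul0r addr0.
rewrite -mulrA tC mulrA fC zf mul0r add0r.
by rewrite -mulrA (mulrA t) -fC -mulrA tt mulr1 ff /f addrC subrK.
Qed.

Lemma idem_mul (x y : R) : x * x = x -> y * y = y -> (x * y) * (x * y) = x * y.
Proof. by move=> xx yy; rewrite -mulrA (mulrA y) -(abR xx) -mulrA yy mulrA xx. Qed.

Lemma idem_blend (g e : R) :
  g * g = g -> e * e = e ->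
  (g * e + (1 - g) * (1 - e)) * (g * e + (1 - g) * (1 - e))
    = g * e + (1 - g) * (1 - e).
Proof.
move=> gg ee; have ff := idemC gg; have qq := idemC ee.
have gf := idem_mulC gg; have fg := idemC_mul gg.
set f := 1 - g in ff gf fg *; set q := 1 - e in qq *; clearbody f q.
rewrite mulrDl !mulrDr !idem_mul //.
have -> : g * e * (f * q) = (g * f) * (e * q).
  by rewrite !mulrA; congr (_ * _); rewrite -!mulrA (abR ee).
have -> : f * q * (g * e) = (f * g) * (q * e).
  by rewrite !mulrA; congr (_ * _); rewrite -!mulrA (abR gg).
by rewrite gf fg !mul0r addr0 add0r.
Qed.

Lemma weakly_r_clean_elem_rinv (a : R) :
  weakly_r_clean_elem +%R -%R *%R a ->
  exists c E, (exists w, c * w = 1) /\ E * E = E /\ (a = c + E \/ a = c - E).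
Proof.
move=> [r [e [[y ryr] [ee a_def]]]]; rewrite /is_idem in ee.
have [z [rzr zrz]] := reflexive_inverse ryr.
set g := r * z; set t := e *+ 2 - 1; set E := g * e + (1 - g) * (1 - e).
have gg : g * g = g by rewrite /g mulrA rzr.
have tt := sqr_idem_reflection ee.
have tC u : t * u = u * t by rewrite mulrBl mulrBr mul1r mulr1 mulrnAl mulrnAr abR.
have EE : E * E = E by exact: idem_blend.
have e_def : e = (1 - g) * t + E.
  have te : t + (1 - e) = e by rewrite /t addrA subrK mulr2n addrK.
  by rewrite /E addrCA -mulrDr te -mulrDl addrC subrK mul1r.
case: a_def => ->.
- exists (r + (1 - g) * t), E; split.
    by exists (z + (1 - g) * t); exact: reflexive_inverse_rinv.
  by split=> //; left; rewrite e_def addrA.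
- exists (r + (1 - g) * - t), E; split.
    exists (z + (1 - g) * - t); apply: reflexive_inverse_rinv => //.
      by rewrite mulrNN.
    by move=> u; rewrite mulNr mulrN tC.
  by split=> //; right; rewrite e_def opprD mulrN addrA.
Qed.

End AbelianRing.

Section SkewPowerSeries.
Variables (R : nzRingType) (alpha : R -> R).
Local Notation mul := (ps_mul alpha).

Definition ps_const (a : R) : pseries R := fun n => if n is 0 then a else 0.

Lemma ps_mul_coef0 (f g : pseries R) : mul f g 0%N = f 0%N * g 0%N.
Proof. by rewrite /ps_mul big_ord1. Qed.

Lemma ps_mul_coefS (f g : pseries R) n : mul f g n.+1 =
  f 0%N * g n.+1 + \sum_(i < n.+1) f i.+1 * iter i.+1 alpha (g (n - i)%N).
Proof. by rewrite /ps_mul big_ord_recl. Qed.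

Lemma ps_const_idem (e : R) : e * e = e -> mul (ps_const e) (ps_const e) = ps_const e.
Proof.
move=> ee; apply: functional_extensionality => -[|n]; first by rewrite ps_mul_coef0.
by rewrite ps_mul_coefS big1 ?mulr0 ?addr0 // => i _; rewrite mul0r.
Qed.

Lemma ps_mul1 (f : pseries R) : mul (ps_const 1) f = f.
Proof.
apply: functional_extensionality => -[|n]; first by rewrite ps_mul_coef0 mul1r.
by rewrite ps_mul_coefS big1 ?addr0 ?mul1r // => i _; rewrite mul0r.
Qed.

Section RightInverse.
Variables (s : pseries R) (w : R).
Hypothesis s0w : s 0%N * w = 1.

(* Row n lists the coefficients 0..n of the right inverse of s; its entries
   beyond n are junk. *)
Fixpoint ps_rinv_table (n : nat) : nat -> R :=
  match n with
  | 0 => fun _ => w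
  | n.+1 => fun k => if (k <= n)%N then ps_rinv_table n k
      else - (w * \sum_(i < n.+1) s i.+1 * iter i.+1 alpha (ps_rinv_table n (n - i)%N))
  end.

Lemma ps_rinv_tableE n k : (k <= n)%N -> ps_rinv_table n k = ps_rinv_table k k.
Proof.
elim: n => [|n IHn] kn; first by move: kn; rewrite leqn0 => /eqP ->.
have [kn'|nk] := leqP k n; first by rewrite /= kn' IHn.
by have -> : k = n.+1 by apply/eqP; rewrite eqn_leq kn.
Qed.

Definition ps_rinv : pseries R := fun k => ps_rinv_table k k.

Lemma ps_mulr_rinv : mul s ps_rinv = ps_const 1.
Proof.
apply: functional_extensionality => -[|n]; first by rewrite ps_mul_coef0.
rewrite ps_mul_coefS /ps_rinv /= ltnn.
under eq_bigr => i _ do rewrite (@ps_rinv_tableE n (n - i)%N) ?leq_subr //.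
by rewrite mulrN mulrA s0w mul1r addNr.
Qed.

End RightInverse.

Lemma ps_reg_coef0_rinv (s : pseries R) (w : R) : s 0%N * w = 1 -> is_reg mul s.
Proof. by move=> s0w; exists (ps_rinv s w); rewrite ps_mulr_rinv // ps_mul1. Qed.

Lemma ps_weakly_r_clean_elem (f : pseries R) (c E w : R) :
  c * w = 1 -> E * E = E -> f 0%N = c + E \/ f 0%N = c - E ->
  weakly_r_clean_elem (@ps_add R) (@ps_opp R) mul f.
Proof.
move=> cw EE [f0|f0].
- exists (ps_add f (ps_opp (ps_const E))), (ps_const E); split.
    by apply: (@ps_reg_coef0_rinv _ w); rewrite /ps_add /ps_opp /= f0 addrK.
  split; first exact: ps_const_idem.
  by left; apply: functional_extensionality => n; rewrite /ps_add /ps_opp subrK.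
- exists (ps_add f (ps_const E)), (ps_const E); split.
    by apply: (@ps_reg_coef0_rinv _ w); rewrite /ps_add /= f0 subrK.
  split; first exact: ps_const_idem.
  by right; apply: functional_extensionality => n; rewrite /ps_add /ps_opp addrK.
Qed.

Lemma weakly_r_clean_elem_coef0 (f : pseries R) :
  weakly_r_clean_elem (@ps_add R) (@ps_opp R) mul f ->
  weakly_r_clean_elem +%R -%R *%R (f 0%N).
Proof.
have coef0 (g h : pseries R) : g = h -> g 0%N = h 0%N by move->.
move=> [r [e [[y ryr] [ee f_def]]]]; exists (r 0%N), (e 0%N).
split; first by exists (y 0%N); move/coef0: ryr; rewrite !ps_mul_coef0.
split; first by move/coef0: ee; rewrite ps_mul_coef0.
by case: f_def => /coef0 f0; [left|right].
Qed.

End SkewPowerSeries.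

Lemma weakly_r_clean_skew_ps (R : nzRingType) (alpha : R -> R) :
  abelian_ring R -> weakly_r_clean R <-> skew_ps_weakly_r_clean alpha.
Proof.
move=> abR; split=> [wcR f | wcS a].
- have [c [E [[w cw] [EE f0]]]] := weakly_r_clean_elem_rinv abR (wcR (f 0%N)).
  exact: ps_weakly_r_clean_elem cw EE f0.
- exact: weakly_r_clean_elem_coef0 (wcS (ps_const a)).
Qed.

Theorem proposition2p12 (R : nzRingType) (alpha : {rmorphism R -> R}) :
  abelian_ring R ->
  (weakly_r_clean R <-> ps_weakly_r_clean R) /\
  (ps_weakly_r_clean R <-> skew_ps_weakly_r_clean alpha).
Proof.
move=> abR; have := weakly_r_clean_skew_ps (@id R) abR.
have := weakly_r_clean_skew_ps alpha abR.
rewrite /ps_weakly_r_clean; tauto.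
Qed.
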